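(* Let $f(x)=\frac1n\sum_{i=1}^nf_i(x)$ on $\mathbb{R}^d$ where each $f_i$ is convex (not necessarily differentiable) and lower bounded, and let $x^*$ be a minimizer of $f$. For any non-decreasing positive sequence $(c_k)_{k\ge0}$, consider the stochastic subgradient method with the DecSPS-NS stepsize (defined in the context). Then for every $K\ge1$, $$\mathbb{E}[f(\bar x^K)-f(x^* )]\le\frac{c_{K-1}D^2}{\gamma_\ell c_0K}+\frac1K\sum_{k=0}^{K-1}\frac{c_0\gamma_bG^2}{c_k},$$ where $\bar x^K=\frac1K\sum_{k=0}^{K-1}x^k$, $D^2:=\max_{k\in[K-1]}\|x^k-x^*\|^2$ and $G^2:=\max_{k\in[K-1]}\|g_{\mathcal S_k}(x^k)\|^2$.
   Context: Minibatches: fix a batch size $B$; at each iteration a subset $\mathcal S_k\subseteq[n]$, $|\mathcal S_k|=B$, is sampled uniformly at random, independently across iterations. For $\mathcal S\subseteq[n]$, $f_{\mathcal S}:=\frac1{|\mathcal S|}\sum_{i\in\mathcal S}f_i$, $f^*_{\mathcal S}:=\inf_xf_{\mathcal S}(x)$, $\ell^*_{\mathcal S}$ is a given real number with $\ell^*_{\mathcal S}\le f^*_{\mathcal S}$, and $g_{\mathcal S}(x)$ denotes a subgradient of $f_{\mathcal S}$ at $x$. Method: $x^{k+1}=x^k-\gamma_kg_{\mathcal S_k}(x^k)$. DecSPS-NS stepsize: $\gamma_k:=\frac1{c_k}\min\left\{\max\left\{c_0\gamma_\ell,\ \frac{f_{\mathcal S_k}(x^k)-\ell^*_{\mathcal S_k}}{\|g_{\mathcal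 S_k}(x^k)\|^2}\right\},\ c_{k-1}\gamma_{k-1}\right\}$ for $k\ge0$, with $c_{-1}=c_0$, $\gamma_{-1}=\gamma_b$, where $0<\gamma_\ell\le\gamma_b$ are fixed constants. $[K-1]$ denotes $\{0,\dots,K-1\}$. *)

From HB Require Import structures.
From mathcomp Require Import all_boot all_order all_algebra.
From mathcomp Require Import classical_sets reals.
Set Implicit Arguments. Unset Strict Implicit. Unset Printing Implicit Defensive.
Import Order.TTheory GRing.Theory Num.Theory.
Local Open Scope ring_scope.

Section Defs.
Variables (R : realType) (d n : nat).
Notation vec := 'rV[R]_d.

Definition dotp (u v : vec) : R := \sum_(j < d) u 0 j * v 0 j.
Definition sqnorm (u : vec) : R := dotp u u.

Definition convex_fun (h : vec -> R) : Prop :=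
  forall (x y : vec) (t : R), 0 <= t -> t <= 1 ->
    h (t *: x + (1 - t) *: y) <= t * h x + (1 - t) * h y.

Definition lower_bounded (h : vec -> R) : Prop :=
  exists m : R, forall x, m <= h x.

Definition is_subgradient (h : vec -> R) (g x : vec) : Prop :=
  forall y : vec, h x + dotp g (y - x) <= h y.

Definition favg (f : 'I_n -> vec -> R) (x : vec) : R :=
  n%:R^-1 * \sum_(i < n) f i x.

Definition fS (f : 'I_n -> vec -> R) (S : {set 'I_n}) (x : vec) : R :=
  (#|S|%:R)^-1 * \sum_(i in S) f i x.

Definition fSstar (f : 'I_n -> vec -> R) (S : {set 'I_n}) : R :=
  inf [set fS f S x | x in [set: vec]].

(* One step of SGD with DecSPS-NS. State = (x^k, c_{k-1} gamma_{k-1}).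
   Returns (gamma_k, x^{k+1}, c_k gamma_k). *)
Definition decsps_gamma (f : 'I_n -> vec -> R) (ell : {set 'I_n} -> R)
  (g : {set 'I_n} -> vec -> vec) (c : nat -> R) (gl : R)
  (k : nat) (S : {set 'I_n}) (x : vec) (prev : R) : R :=
  (c k)^-1 * Num.min (Num.max (c 0%N * gl) ((fS f S x - ell S) / sqnorm (g S x))) prev.

(* state after k steps: (x^k, c_{k-1} gamma_{k-1}), with c_{-1} gamma_{-1} = c_0 gamma_b *)
Fixpoint decsps_state (f : 'I_n -> vec -> R) (ell : {set 'I_n} -> R)
  (g : {set 'I_n} -> vec -> vec) (c : nat -> R) (gl gb : R)
  (Ss : nat -> {set 'I_n}) (x0 : vec) (k : nat) : vec * R :=
  match k with
  | 0%N => (x0, c 0%N * gb)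
  | k'.+1 =>
      let st := decsps_state f ell g c gl gb Ss x0 k' in
      let gam := decsps_gamma f ell g c gl k' (Ss k') st.1 st.2 in
      (st.1 - gam *: g (Ss k') st.1, c k' * gam)
  end.

Definition iterate f ell g c gl gb Ss x0 k : vec :=
  (decsps_state f ell g c gl gb Ss x0 k).1.

(* Sample space for K iterations: sequences (S_0,...,S_{K-1}) of B-subsets of [n].
   Uniform i.i.d. sampling = uniform distribution on this finite set. *)
Definition batch_seqs (B K : nat) : {set {ffun 'I_K -> {set 'I_n}}} :=
  [set w : {ffun 'I_K -> {set 'I_n}} | [forall i : 'I_K, #|w i| == B]].

Definition seq_of (K : nat) (w : {ffun 'I_K -> {set 'I_n}}) (k : nat) : {set 'I_n} :=
  if insub k is Some i then w i else finset.set0.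

Definition Expect (B K : nat) (X : {ffun 'I_K -> {set 'I_n}} -> R) : R :=
  (\sum_(w in batch_seqs B K) X w) / #|batch_seqs B K|%:R.

End Defs.

From HB Require Import structures.
From mathcomp Require Import all_boot all_order all_algebra.
From mathcomp Require Import classical_sets reals ring lra.
Set Implicit Arguments.
Unset Strict Implicit.
Unset Printing Implicit Defensive.
Import Order.TTheory GRing.Theory Num.Theory.
Local Open Scope ring_scope.

(* The subgradient inequality at [xstar] turns one step of the method into
     2 (f_{S_k}(x_k) - f_{S_k}(xstar))
       <= (|x_k - xstar|^2 - |x_{k+1} - xstar|^2) / gamma_k + gamma_k |g_k|^2.
   DecSPS-NS keeps c_k gamma_k in [c_0 gamma_l, c_0 gamma_b] and non-increasing, so the
   gamma_k decrease: Abel summation with the increasing weights 1 / gamma_k bounds the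
   telescoping part by D^2 / gamma_{K-1} <= c_{K-1} D^2 / (c_0 gamma_l), while
   gamma_k <= c_0 gamma_b / c_k bounds the rest.
   In expectation f_{S_k}(x_k) can be replaced by f(x_k): x_k only depends on
   S_0, ..., S_{k-1}, and the uniform law of S_k is invariant under the cyclic shifts
   i |-> i + t of [n], whose average turns f_S into f.  Jensen's inequality for the
   convex f concludes. *)

Section Vectors.
Variables (R : realType) (d : nat).
Implicit Types (u v : 'rV[R]_d) (a : R).

Lemma sqnorm_ge0 u : 0 <= sqnorm u.
Proof. by apply: sumr_ge0 => j _; rewrite -expr2 sqr_ge0. Qed.

Lemma dotpNr u v : dotp u (- v) = - dotp u v.
Proof. by rewrite /dotp -sumrN; apply: eq_bigr => j _; rewrite !mxE mulrN. Qed.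

Lemma sqnormBZ u v a :
  sqnorm (u - a *: v) = sqnorm u - 2 * a * dotp v u + a ^+ 2 * sqnorm v.
Proof.
rewrite /sqnorm /dotp !mulr_sumr -sumrB -big_split /=.
by apply: eq_bigr => j _; rewrite !mxE; ring.
Qed.

Lemma convex_jensen_avg (h : 'rV[R]_d -> R) m (x : nat -> 'rV[R]_d) : convex_fun h ->
  h (m.+1%:R^-1 *: \sum_(k < m.+1) x k) <= m.+1%:R^-1 * \sum_(k < m.+1) h (x k).
Proof.
move=> h_convex; elim: m x => [|m IH] x; first by rewrite !big_ord1 invr1 scale1r mul1r.
rewrite big_ord_recr [in X in _ <= X]big_ord_recr /=.
set S := \sum_(i < m.+1) x i; set H := \sum_(i < m.+1) h (x i).
set a : R := m.+1%:R.
have -> : m.+2%:R = a + 1 :> R by rewrite -[m.+2]addn1 natrD.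
set t := (a + 1)^-1.
have a_gt0 : 0 < a by rewrite ltr0n.
have t_gt0 : 0 < t by rewrite invr_gt0; lra.
have t_le1 : t <= 1 by rewrite invf_le1; lra.
have weight : (1 - t) * a^-1 = t by rewrite /t; field; rewrite !gt_eqF //; lra.
have -> : t *: (S + x m.+1) = t *: x m.+1 + (1 - t) *: (a^-1 *: S).
  by rewrite scalerA weight scalerDr addrC.
apply: le_trans (h_convex _ _ _ _ _) _; [lra | lra |].
have : (1 - t) * h (a^-1 *: S) <= t * H.
  by rewrite -[t in t * H]weight -mulrA; apply: ler_wpM2l (IH x); lra.
lra.
Qed.

Lemma convex_favg n (f : 'I_n -> 'rV[R]_d -> R) :
  (forall i, convex_fun (f i)) -> convex_fun (favg f).
Proof.
move=> f_convex x y t t_ge0 t_le1; rewrite /favg.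
apply: le_trans (_ : n%:R^-1 * \sum_(i < n) (t * f i x + (1 - t) * f i y) <= _).
  by apply: ler_wpM2l; rewrite ?invr_ge0 ?ler0n //; apply: ler_sum => i _; apply: f_convex.
by rewrite big_split /= -!mulr_sumr mulrDr [_ * (t * _)]mulrCA [_ * ((1 - t) * _)]mulrCA.
Qed.

End Vectors.

(* Abel summation: the weights u k only grow, so each a k costs at most D (u k - u k.-1). *)
Lemma sum_telescope_weighted_le (R : realDomainType) (a u : nat -> R) (D : R) m :
  (forall k, (k <= m)%N -> a k <= D) -> (forall k, 0 <= a k) ->
  (forall k, 0 <= u k) -> (forall k, u k <= u k.+1) ->
  \sum_(k < m.+1) (a k - a k.+1) * u k <= D * u m.
Proof.
move=> a_le a_ge0 u_ge0 u_nondecr.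
suff : \sum_(k < m.+1) (a k - a k.+1) * u k + a m.+1 * u m <= D * u m.
  by have := a_ge0 m.+1; have := u_ge0 m; nra.
elim: m a_le => [|m IH] a_le.
  by rewrite big_ord1; have := a_le 0%N (leqnn _); have := u_ge0 0%N; nra.
rewrite big_ord_recr /=.
have := IH (fun k km => a_le k (leqW km)).
have : 0 <= (D - a m.+1) * (u m.+1 - u m).
  by apply: mulr_ge0; [have := a_le m.+1 (leqnn _) | have := u_nondecr m]; lra.
nra.
Qed.

Section DecSPS.
Variables (R : realType) (d n B : nat).
Variables (f : 'I_n -> 'rV[R]_d -> R) (g : {set 'I_n} -> 'rV[R]_d -> 'rV[R]_d)
  (ell : {set 'I_n} -> R) (c : nat -> R) (gl gb : R) (x0 : 'rV[R]_d).

Lemma decsps_state_prefix (Ss Ss' : nat -> {set 'I_n}) k :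
  (forall j, (j < k)%N -> Ss j = Ss' j) ->
  decsps_state f ell g c gl gb Ss x0 k = decsps_state f ell g c gl gb Ss' x0 k.
Proof.
elim: k => [//|k IH] eqSs /=.
by rewrite IH ?eqSs // => j jk; apply: eqSs; apply: ltnW.
Qed.

Hypotheses (c_gt0 : forall k, 0 < c k) (c_nondecr : forall k, c k <= c k.+1)
  (gl_gt0 : 0 < gl) (gl_le_gb : gl <= gb).

Variable Ss : nat -> {set 'I_n}.
Let x k := iterate f ell g c gl gb Ss x0 k.
Let cgam k := (decsps_state f ell g c gl gb Ss x0 k).2.
Let gam k := decsps_gamma f ell g c gl k (Ss k) (x k) (cgam k).

Lemma cgam_succ k : cgam k.+1 = Num.min
  (Num.max (c 0%N * gl) ((fS f (Ss k) (x k) - ell (Ss k)) / sqnorm (g (Ss k) (x k))))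
  (cgam k).
Proof. by rewrite /cgam /= /decsps_gamma mulrA mulfV ?mul1r // gt_eqF. Qed.

Lemma cgam_bounds k : c 0%N * gl <= cgam k <= c 0%N * gb.
Proof.
elim: k => [|k /andP[lo hi]].
  by rewrite /cgam /= lexx andbT ler_wpM2l // ltW.
by rewrite cgam_succ le_min le_max lexx lo /= ge_min hi orbT.
Qed.

Lemma cgam_gt0 k : 0 < cgam k.
Proof.
by case/andP: (cgam_bounds k) => lo _; apply: lt_le_trans lo; rewrite mulr_gt0.
Qed.

Lemma cgam_nonincr k : cgam k.+1 <= cgam k.
Proof. by rewrite cgam_succ ge_min lexx orbT. Qed.

Lemma gam_eq k : gam k = cgam k.+1 / c k.
Proof.
have -> : cgam k.+1 = c k * gam k by [].
by rewrite [c k * _]mulrC mulfK // gt_eqF.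
Qed.

Lemma gam_gt0 k : 0 < gam k.
Proof. by rewrite gam_eq divr_gt0 ?cgam_gt0. Qed.

Lemma gam_nonincr k : gam k.+1 <= gam k.
Proof.
rewrite !gam_eq; apply: le_trans (_ : cgam k.+1 / c k.+1 <= _).
  by rewrite ler_pM2r ?invr_gt0 // cgam_nonincr.
by rewrite ler_pM2l ?cgam_gt0 // lef_pV2 ?posrE.
Qed.

Lemma invgam_le k : (gam k)^-1 <= c k / (c 0%N * gl).
Proof.
rewrite gam_eq invfM invrK mulrC ler_pM2l // lef_pV2 ?posrE ?cgam_gt0 ?mulr_gt0 //.
by case/andP: (cgam_bounds k.+1).
Qed.

Lemma gam_le k : gam k <= c 0%N * gb / c k.
Proof.
by rewrite gam_eq ler_pM2r ?invr_gt0 //; case/andP: (cgam_bounds k.+1).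
Qed.

Variable xstar : 'rV[R]_d.
Hypothesis subgrad :
  forall (S : {set 'I_n}) y, #|S| = B -> is_subgradient (fS f S) (g S y) y.

Lemma fS_gap_le k : #|Ss k| = B ->
  2 * (fS f (Ss k) (x k) - fS f (Ss k) xstar) <=
  (sqnorm (x k - xstar) - sqnorm (x k.+1 - xstar)) / gam k
  + gam k * sqnorm (g (Ss k) (x k)).
Proof.
move=> SkB.
have := subgrad (x k) SkB xstar; rewrite -opprB dotpNr.
set u := x k - xstar; set v := g (Ss k) (x k) => subgrad_k.
have -> : x k.+1 - xstar = u - gam k *: v.
  by have -> : x k.+1 = x k - gam k *: v by []; rewrite addrAC.
have -> : (sqnorm u - sqnorm (u - gam k *: v)) / gam k + gam k * sqnorm v
          = 2 * dotp v u.
  by rewrite sqnormBZ; field; rewrite gt_eqF ?gam_gt0.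
lra.
Qed.

Let D K := \big[Num.max/0]_(k < K.+1) sqnorm (x k - xstar).
Let G K := \big[Num.max/0]_(k < K.+1) sqnorm (g (Ss k) (x k)).

Lemma sum_fS_gap_le K : (forall k, (k <= K)%N -> #|Ss k| = B) ->
  2 * \sum_(k < K.+1) (fS f (Ss k) (x k) - fS f (Ss k) xstar) <=
  c K * D K / (c 0%N * gl) + \sum_(k < K.+1) (c 0%N * gb * G K / c k).
Proof.
move=> SsB; rewrite mulr_sumr.
have step (k : 'I_K.+1) := @fS_gap_le k (SsB k (ltn_ord k)).
apply: le_trans (ler_sum _ (fun k _ => step k)) _.
rewrite big_split /=; apply: lerD.
  apply: le_trans (_ : D K / gam K <= _).
    apply: (@sum_telescope_weighted_le _ (fun k => sqnorm (x k - xstar))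
                                          (fun k => (gam k)^-1)) => k.
    - move=> kK; pose i : 'I_K.+1 := Ordinal (kK : (k < K.+1)%N).
      exact: (le_bigmax _ (fun i : 'I_K.+1 => sqnorm (x i - xstar)) i).
    - exact: sqnorm_ge0.
    - by rewrite invr_ge0 ltW ?gam_gt0.
    - by rewrite lef_pV2 ?posrE ?gam_gt0 ?gam_nonincr.
  rewrite [c K * _]mulrC -mulrA; apply: ler_wpM2l; last exact: invgam_le.
  by rewrite /D bigmax_ge_id.
apply: ler_sum => k _.
have -> : c 0%N * gb * G K / c k = c 0%N * gb / c k * G K by rewrite mulrAC.
apply: ler_pM; [exact/ltW/gam_gt0 | exact: sqnorm_ge0 | exact: gam_le |].
exact: (le_bigmax _ (fun i : 'I_K.+1 => sqnorm (g (Ss i) (x i))) k).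
Qed.

Lemma avg_fS_gap_le K : (forall k, (k <= K)%N -> #|Ss k| = B) ->
  K.+1%:R^-1 * \sum_(k < K.+1) (fS f (Ss k) (x k) - fS f (Ss k) xstar) <=
  c K * D K / (gl * c 0%N * K.+1%:R)
  + K.+1%:R^-1 * \sum_(k < K.+1) (c 0%N * gb * G K / c k).
Proof.
move=> SsB; have := @sum_fS_gap_le K SsB.
have -> : c K * D K / (gl * c 0%N * K.+1%:R) = K.+1%:R^-1 * (c K * D K / (c 0%N * gl)).
  by field; rewrite !gt_eqF // [1 + _]addrC natr1 ltr0n.
rewrite -mulrDr => sum_le; apply: ler_wpM2l; first by rewrite invr_ge0 ler0n.
(* The bound gives away the factor 2 of [sum_fS_gap_le]. *)
have gb_ge0 : 0 <= gb by apply: le_trans (ltW gl_gt0) gl_le_gb.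
have D_ge0 : 0 <= D K by rewrite /D bigmax_ge_id.
have G_ge0 : 0 <= G K by rewrite /G bigmax_ge_id.
have c0_ge0 := ltW (c_gt0 0%N).
have := divr_ge0 (mulr_ge0 (ltW (c_gt0 K)) D_ge0) (mulr_ge0 c0_ge0 (ltW gl_gt0)).
have : 0 <= \sum_(k < K.+1) (c 0%N * gb * G K / c k).
  by apply: sumr_ge0 => k _; rewrite divr_ge0 ?mulr_ge0 // ltW.
lra.
Qed.

End DecSPS.

Section BatchSymmetry.
Variables (R : realType) (d n' K B : nat).
Local Notation n := n'.+1.
Local Notation W := {ffun 'I_K -> {set 'I_n}}.

Lemma seq_of_ord (w : W) (k : 'I_K) : seq_of w k = w k.
Proof. by rewrite /seq_of valK. Qed.

Lemma card_seq_of (w : W) k : w \in batch_seqs n B K -> (k < K)%N -> #|seq_of w k| = B.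
Proof.
move=> /[!inE] /forallP w_batch kK.
by rewrite (_ : k = Ordinal kK) // seq_of_ord; apply/eqP/w_batch.
Qed.

Definition shift_batch (k : 'I_K) (t : 'I_n) (w : W) : W :=
  [ffun j => if j == k then [set i + t | i in w j] else w j].

Lemma shift_batch_inj k t : injective (shift_batch k t).
Proof.
move=> w1 w2 /ffunP eqw; apply/ffunP => j; have := eqw j; rewrite !ffunE.
by case: ifP => // _; apply: imset_inj; apply: addIr.
Qed.

Lemma shift_batch_mem k t w :
  (shift_batch k t w \in batch_seqs n B K) = (w \in batch_seqs n B K).
Proof.
rewrite !inE; apply: eq_forallb => j; rewrite ffunE.
by case: ifP => // _; rewrite card_imset //; apply: addIr.
Qed.

Lemma sum_fS_shifts (f : 'I_n -> 'rV[R]_d -> R) (S : {set 'I_n}) y : (0 < #|S|)%N ->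
  \sum_(t < n) fS f [set i + t | i in S] y = n%:R * favg f y.
Proof.
move=> S_gt0; rewrite /favg /fS.
have fS_shift t : #|[set i + t | i in S]|%:R^-1 * \sum_(i in [set i + t | i in S]) f i y
                  = #|S|%:R^-1 * \sum_(i in S) f (i + t) y.
  by rewrite (card_imset _ (addIr t)) big_imset //; apply: in2W; apply: addIr.
rewrite (eq_bigr _ (fun t _ => fS_shift t)) -mulr_sumr exchange_big /=.
have shift_sum i : \sum_(j < n) f (i + j) y = \sum_(j < n) f j y.
  by rewrite [RHS](reindex_inj (addrI i)).
rewrite (eq_bigr _ (fun i _ => shift_sum i)) sumr_const.
by field; rewrite [1 + _]addrC natr1 !pnatr_eq0 /= -lt0n.
Qed.

Lemma sum_batch_fS (f : 'I_n -> 'rV[R]_d -> R) (k : 'I_K) (Y : W -> 'rV[R]_d) :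
  (0 < B)%N -> (forall t w, Y (shift_batch k t w) = Y w) ->
  \sum_(w in batch_seqs n B K) fS f (w k) (Y w) =
  \sum_(w in batch_seqs n B K) favg f (Y w).
Proof.
move=> B_gt0 Y_shift; apply: (@mulfI _ n%:R); first by rewrite pnatr_eq0.
set F := fun w : W => fS f (w k) (Y w).
have sum_shift t : \sum_(w in batch_seqs n B K) F w
                   = \sum_(w in batch_seqs n B K) F (shift_batch k t w).
  rewrite (reindex_inj (shift_batch_inj (k:=k) (t:=t))).
  by apply: eq_bigl => w; rewrite shift_batch_mem.
transitivity (\sum_(t < n) \sum_(w in batch_seqs n B K) F (shift_batch k t w)).
  by rewrite -(eq_bigr _ (fun t _ => sum_shift t)) sumr_const card_ord mulr_natl.
rewrite exchange_big mulr_sumr; apply: eq_bigr => w /[!inE] /forallP /(_ k) /eqP wkB.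
under eq_bigr => t _ do rewrite /F Y_shift ffunE eqxx.
by rewrite sum_fS_shifts // wkB.
Qed.

End BatchSymmetry.

Section Expectation.
Variables (R : realType) (d n' B : nat).
Local Notation n := n'.+1.
Variables (f : 'I_n -> 'rV[R]_d -> R) (g : {set 'I_n} -> 'rV[R]_d -> 'rV[R]_d)
  (ell : {set 'I_n} -> R) (c : nat -> R) (gl gb : R) (x0 xstar : 'rV[R]_d).
Let x K (w : {ffun 'I_K -> {set 'I_n}}) k := iterate f ell g c gl gb (seq_of w) x0 k.

Lemma iterate_shift_batch K (k : 'I_K) t w : x (shift_batch k t w) k = x w k.
Proof.
congr fst; apply: decsps_state_prefix => j jk; rewrite /seq_of.
case: insubP => [i _ ij|_] //; rewrite ffunE.
by case: eqP => // ik; move: jk; rewrite -ij ik ltnn.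
Qed.

Hypothesis B_gt0 : (0 < B)%N.

Lemma sum_batch_favg_gap K :
  \sum_(w in batch_seqs n B K) \sum_(k < K) (favg f (x w k) - favg f xstar) =
  \sum_(w in batch_seqs n B K) \sum_(k < K)
    (fS f (seq_of w k) (x w k) - fS f (seq_of w k) xstar).
Proof.
rewrite exchange_big [RHS]exchange_big; apply: eq_bigr => k _.
under [RHS]eq_bigr => w _ do rewrite seq_of_ord.
rewrite !sumrB (sum_batch_fS f (Y := fun w => x w k)) //.
rewrite (sum_batch_fS f (Y := fun=> xstar)) //.
exact: iterate_shift_batch.
Qed.

Hypotheses (f_convex : forall i, convex_fun (f i))
  (subgrad : forall (S : {set 'I_n}) y, #|S| = B -> is_subgradient (fS f S) (g S y) y)
  (c_gt0 : forall k, 0 < c k) (c_nondecr : forall k, c k <= c k.+1)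
  (gl_gt0 : 0 < gl) (gl_le_gb : gl <= gb).

Lemma expected_gap_le K :
  Expect B (fun w : {ffun 'I_K.+1 -> {set 'I_n}} =>
    favg f (K.+1%:R^-1 *: \sum_(k < K.+1) x w k) - favg f xstar)
  <= Expect B (fun w : {ffun 'I_K.+1 -> {set 'I_n}} =>
    c K * \big[Num.max/0]_(k < K.+1) sqnorm (x w k - xstar) / (gl * c 0%N * K.+1%:R)
    + K.+1%:R^-1 * \sum_(k < K.+1)
        (c 0%N * gb * \big[Num.max/0]_(j < K.+1) sqnorm (g (seq_of w j) (x w j)) / c k)).
Proof.
rewrite /Expect; apply: ler_wpM2r; first by rewrite invr_ge0 ler0n.
have jensen (w : {ffun 'I_K.+1 -> {set 'I_n}}) :
    favg f (K.+1%:R^-1 *: \sum_(k < K.+1) x w k) - favg f xstar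
    <= K.+1%:R^-1 * \sum_(k < K.+1) (favg f (x w k) - favg f xstar).
  rewrite sumrB sumr_const card_ord -[favg f xstar *+ _]mulr_natr mulrBr.
  rewrite mulrCA mulVf ?mulr1 ?pnatr_eq0 //.
  by rewrite lerD2r; apply: convex_jensen_avg; apply: convex_favg.
apply: le_trans (ler_sum _ (fun w _ => jensen w)) _.
rewrite -mulr_sumr sum_batch_favg_gap mulr_sumr.
apply: ler_sum => w w_batch; apply: (avg_fS_gap_le (B := B)) => // k kK.
exact: card_seq_of w_batch kK.
Qed.

End Expectation.

Theorem theorem5 (R : realType) (d n B : nat)
  (f : 'I_n -> 'rV[R]_d -> R)
  (g : {set 'I_n} -> 'rV[R]_d -> 'rV[R]_d)
  (ell : {set 'I_n} -> R)
  (c : nat -> R) (gl gb : R) (x0 xstar : 'rV[R]_d) (K : nat) :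
  (0 < B)%N -> (B <= n)%N ->
  (forall i, convex_fun (f i)) ->
  (forall i, lower_bounded (f i)) ->
  (forall x, favg f xstar <= favg f x) ->
  (forall S : {set 'I_n}, #|S| = B -> ell S <= fSstar f S) ->
  (forall (S : {set 'I_n}) x, #|S| = B -> is_subgradient (fS f S) (g S x) x) ->
  (forall k, 0 < c k) -> (forall k, c k <= c k.+1) ->
  0 < gl -> gl <= gb ->
  (1 <= K)%N ->
  let x := fun (w : {ffun 'I_K -> {set 'I_n}}) (k : nat) => iterate f ell g c gl gb (seq_of w) x0 k in
  let xbar := fun (w : {ffun 'I_K -> {set 'I_n}}) => K%:R^-1 *: \sum_(k < K) x w k in
  let D2 := fun (w : {ffun 'I_K -> {set 'I_n}}) => \big[Num.max/0]_(k < K) sqnorm (x w k - xstar) in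
  let G2 := fun (w : {ffun 'I_K -> {set 'I_n}}) => \big[Num.max/0]_(k < K) sqnorm (g (seq_of w k) (x w k)) in
  Expect B (fun (w : {ffun 'I_K -> {set 'I_n}}) => favg f (xbar w) - favg f xstar)
  <= Expect B (fun (w : {ffun 'I_K -> {set 'I_n}}) =>
       c K.-1 * D2 w / (gl * c 0%N * K%:R)
       + K%:R^-1 * \sum_(k < K) (c 0%N * gb * G2 w / c k)).
Proof.
move=> B_gt0 B_le_n f_convex _ _ _ subgrad c_gt0 c_nondecr gl_gt0 gl_le_gb.
destruct n as [|n']; first by rewrite leqNgt B_gt0 in B_le_n.
by case: K => [//|K] _; apply: expected_gap_le.
Qed.
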